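(* Let $n,k$ be positive integers with $n\ge k$. Then the Jacobi-Stirling numbers $\mathrm{JS}_n^k(z)$ and $(-1)^{n-k}\mathrm{js}_n^k(z)$ are polynomials in $z$ of degree $n-k$ with positive integer coefficients. Moreover, writing $$\mathrm{JS}_n^k(z)=a_{n,k}^{(0)}+a_{n,k}^{(1)}z+\cdots+a_{n,k}^{(n-k)}z^{n-k},\qquad (-1)^{n-k}\mathrm{js}_n^k(z)=b_{n,k}^{(0)}+b_{n,k}^{(1)}z+\cdots+b_{n,k}^{(n-k)}z^{n-k},$$ we have $$a_{n,k}^{(n-k)}=S(n,k),\quad a_{n,k}^{(0)}=U(n,k),\quad b_{n,k}^{(n-k)}=|s(n,k)|,\quad b_{n,k}^{(0)}=|u(n,k)|.$$
   Context: The Jacobi-Stirling numbers of the second kind $\mathrm{JS}_n^k(z)$ and of the first kind $\mathrm{js}_n^k(z)$ are defined for integers $n,k\ge 0$ by $\mathrm{JS}_0^0(z)=\mathrm{js}_0^0(z)=1$, $\mathrm{JS}_n^k(z)=\mathrm{js}_n^k(z)=0$ if $k\notin\{1,\dots,n\}$ (for $(n,k)\neq(0,0)$), and for $n,k\ge1$: $\mathrm{JS}_n^k(z)=\mathrm{JS}_{n-1}^{k-1}(z)+k(k+z)\mathrm{JS}_{n-1}^k(z)$ and $\mathrm{js}_n^k(z)=\mathrm{js}_{n-1}^{k-1}(z)-(n-1)(n-1+z)\mathrm{js}_{n-1}^k(z)$. Equivalently, $x^n=\sum_{k=0}^n\mathrm{JS}_n^k(z)\prod_{i=0}^{k-1}(x-i(z+i))$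 and $\prod_{i=0}^{n-1}(x-i(z+i))=\sum_{k=0}^n\mathrm{js}_n^k(z)x^k$. $S(n,k)$ and $s(n,k)$ are the Stirling numbers of the second and first kind: $x^n=\sum_k S(n,k)\prod_{i=0}^{k-1}(x-i)$ and $\prod_{i=0}^{n-1}(x-i)=\sum_k s(n,k)x^k$. $U(n,k)$ and $u(n,k)$ (central factorial numbers of even indices, $U(n,k)=T(2n,2k)$, $u(n,k)=t(2n,2k)$) are defined by $U(0,0)=u(0,0)=1$, $U(n,k)=u(n,k)=0$ if $k\notin\{1,\dots,n\}$ (for $(n,k)\ne(0,0)$), and for $n,k\ge1$: $U(n,k)=U(n-1,k-1)+k^2U(n-1,k)$, $u(n,k)=u(n-1,k-1)-(n-1)^2u(n-1,k)$. *)

From mathcomp Require Import all_boot all_order all_algebra.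
Set Implicit Arguments. Unset Strict Implicit. Unset Printing Implicit Defensive.
Import GRing.Theory Num.Theory.
Local Open Scope ring_scope.

Fixpoint JS (n k : nat) : {poly int} :=
  match n, k with
  | 0, 0 => 1
  | 0, _.+1 => 0
  | _.+1, 0 => 0
  | n'.+1, k'.+1 =>
      JS n' k' + ((k'.+1)%:R *: ('X + (k'.+1)%:R%:P)) * JS n' k'.+1
  end.

Fixpoint js (n k : nat) : {poly int} :=
  match n, k with
  | 0, 0 => 1
  | 0, _.+1 => 0
  | _.+1, 0 => 0
  | n'.+1, k'.+1 =>
      js n' k' - (n'%:R *: ('X + n'%:R%:P)) * js n' k'.+1
  end.

Fixpoint stirling2 (n k : nat) : int :=
  match n, k with
  | 0, 0 => 1
  | 0, _.+1 => 0
  | _.+1, 0 => 0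
  | n'.+1, k'.+1 => stirling2 n' k' + (k'.+1)%:R * stirling2 n' k'.+1
  end.

Fixpoint stirling1 (n k : nat) : int :=
  match n, k with
  | 0, 0 => 1
  | 0, _.+1 => 0
  | _.+1, 0 => 0
  | n'.+1, k'.+1 => stirling1 n' k' - n'%:R * stirling1 n' k'.+1
  end.

(* Central factorial numbers U(n,k) = T(2n,2k). *)
Fixpoint cfU (n k : nat) : int :=
  match n, k with
  | 0, 0 => 1
  | 0, _.+1 => 0
  | _.+1, 0 => 0
  | n'.+1, k'.+1 => cfU n' k' + ((k'.+1)%:R ^+ 2) * cfU n' k'.+1
  end.

(* Central factorial numbers u(n,k) = t(2n,2k). *)
Fixpoint cfu (n k : nat) : int :=
  match n, k with
  | 0, 0 => 1
  | 0, _.+1 => 0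
  | _.+1, 0 => 0
  | n'.+1, k'.+1 => cfu n' k' - (n'%:R ^+ 2) * cfu n' k'.+1
  end.

From mathcomp Require Import all_boot all_order all_algebra.
From mathcomp Require Import zify ring.
Import Order.TTheory GRing.Theory Num.Theory.
Local Open Scope ring_scope.

(* All six arrays are instances of one triangle recurrence
   T(n+1,k+1) = T(n,k) + w(n,k) T(n,k+1). The Jacobi-Stirling weights are the
   linear polynomials w = a z + b with (a, b) = (k, k^2) for the second kind
   and (n, n^2) for the sign-corrected first kind, where the signs disappear
   because (-1)^(n-k) T for the weight -w is T for w. Along the recurrence the
   top coefficient (degree n-k) only sees the a-parts and the constant
   coefficient only the b-parts, giving S, |s|, U and |u|; positivity of all
   coefficients propagates since every weight has nonnegative coefficients and
   w(n,0) has two positive ones for n > 0. *)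

Section Triangle.

Variable R : pzRingType.

Fixpoint tri (w : nat -> nat -> R) (n k : nat) : R :=
  match n, k with
  | 0, 0 => 1
  | 0, _.+1 => 0
  | _.+1, 0 => 0
  | n'.+1, k'.+1 => tri w n' k' + w n' k' * tri w n' k'.+1
  end.

Implicit Types (w : nat -> nat -> R) (n k : nat).

Lemma eq_tri w1 w2 : w1 =2 w2 -> tri w1 =2 tri w2.
Proof. by move=> eq_w; elim=> [|n IHn] [|k] //=; rewrite !IHn eq_w. Qed.

Lemma tri_eq0 w n k : (n < k)%N -> tri w n k = 0.
Proof.
elim: n k => [|n IHn] [|k] //= ltnk.
by rewrite !IHn ?mulr0 ?addr0 // ltnW.
Qed.

End Triangle.

Arguments tri {R} w n k.

Lemma tri_sign (R : comPzRingType) (w : nat -> nat -> R) n k :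
  (-1) ^+ (n - k) * tri (fun n k => - w n k) n k = tri w n k.
Proof.
elim: n k => [|n IHn] [|k] /=; rewrite ?mulr0 ?mulr1 // subSS.
case: (ltnP k n) => [ltkn | lenk].
  by rewrite -!IHn -(subnSK ltkn) exprS; ring.
by rewrite !(@tri_eq0 _ _ n k.+1) ?ltnS // !mulr0 !addr0 IHn.
Qed.

Lemma tri_ge0 (R : numDomainType) (w : nat -> nat -> R) n k :
  (forall n k, 0 <= w n k) -> 0 <= tri w n k.
Proof.
move=> w_ge0; elim: n k => [|n IHn] [|k] //=.
by rewrite addr_ge0 ?mulr_ge0.
Qed.

Lemma norm_tri_opp (R : numDomainType) (w : nat -> nat -> R) n k :
  (forall n k, 0 <= w n k) -> `|tri (fun n k => - w n k) n k| = tri w n k.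
Proof.
by move=> w_ge0; rewrite -(normrMsign (n - k)) tri_sign ger0_norm ?tri_ge0.
Qed.

Lemma coef0_tri (R : nzRingType) (w : nat -> nat -> {poly R}) n k :
  (tri w n k)`_0 = tri (fun n k => (w n k)`_0) n k.
Proof.
elim: n k => [|n IHn] [|k] /=; rewrite ?coef1 ?coef0 //.
by rewrite coefD coef0M !IHn.
Qed.

Lemma coefMlin (R : nzRingType) (a b : R) (p : {poly R}) i :
  ((a *: 'X + b%:P) * p)`_i = (if i is j.+1 then a * p`_j else 0) + b * p`_i.
Proof.
rewrite mulrDl -scalerAl coefD coefZ coefXM coefCM.
by case: i => [|i]; rewrite ?mulr0.
Qed.

Section LinearWeights.

Variables (R : nzRingType) (a b : nat -> nat -> R).

Definition lin_weight n k : {poly R} := a n k *: 'X + (b n k)%:P.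

Lemma coef0_tri_lin n k : (tri lin_weight n k)`_0 = tri b n k.
Proof.
rewrite coef0_tri; apply: eq_tri => {}n {}k.
by rewrite coefD coefZ coefX coefC mulr0 add0r.
Qed.

Lemma coef_tri_lin_eq0 n k i :
  (k <= n)%N -> (n - k < i)%N -> (tri lin_weight n k)`_i = 0.
Proof.
elim: n k i => [|n IHn] [|k] i //= lekn ltni; rewrite ?coef0 //.
  by rewrite coef1; case: i ltni.
rewrite coefD coefMlin IHn ?add0r //.
have [ltnk | lenk] := ltnP n k.+1.
  rewrite tri_eq0 // coef0 mulr0 addr0.
  by case: i {ltni} => [|i]; rewrite ?coef0 ?mulr0.
case: i ltni => [|i] ltni; first by lia.
by rewrite !IHn ?mulr0 ?addr0 //; lia.
Qed.

Lemma size_tri_lin_le n k :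
  (k <= n)%N -> (size (tri lin_weight n k) <= (n - k).+1)%N.
Proof. by move=> lekn; apply/leq_sizeP => i; apply: coef_tri_lin_eq0. Qed.

Lemma coef_tri_lin_top n k :
  (k <= n)%N -> (tri lin_weight n k)`_(n - k) = tri a n k.
Proof.
elim: n k => [|n IHn] [|k] //= lekn; rewrite ?coef0 ?coef1 //.
rewrite coefD coefMlin subSS IHn //.
have [ltkn | lenk] := ltnP k n.
  rewrite (@coef_tri_lin_eq0 n k.+1 (n - k)) //; last by lia.
  by rewrite -(subnSK ltkn) IHn // mulr0 addr0.
have -> : k = n by lia.
by rewrite subnn !(@tri_eq0 _ _ n n.+1) // coef0 !mulr0 !addr0.
Qed.

End LinearWeights.

Arguments lin_weight {R} a b n k.

Section PositiveLinearWeights.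

Variables (R : numDomainType) (a b : nat -> nat -> R).
Hypotheses (a_ge0 : forall n k, 0 <= a n k) (b_ge0 : forall n k, 0 <= b n k).
Hypotheses (a_gt0 : forall n, (0 < n)%N -> 0 < a n 0)
           (b_gt0 : forall n, (0 < n)%N -> 0 < b n 0).

Lemma coef_tri_lin_ge0 n k i : 0 <= (tri (lin_weight a b) n k)`_i.
Proof.
elim: n k i => [|n IHn] [|k] i /=; rewrite ?coef0 ?coef1 ?ler0n //.
rewrite coefD coefMlin; apply/addr_ge0/addr_ge0 => //; last exact: mulr_ge0.
by case: i => // i; apply: mulr_ge0.
Qed.

Lemma coef_tri_lin_gt0 n k i :
    (0 < k)%N -> (k <= n)%N -> (i <= n - k)%N ->
  0 < (tri (lin_weight a b) n k)`_i.
Proof.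
elim: n k i => [|n IHn] [|k] i //= _ lekn leik.
rewrite coefD coefMlin.
set Q := tri (lin_weight a b) n k.+1.
have next_ge0 : 0 <= (if i is j.+1 then a n k * Q`_j else 0) + b n k * Q`_i.
  by apply: addr_ge0; [case: i {leik} => // i|]; apply: mulr_ge0 => //;
    apply: coef_tri_lin_ge0.
rewrite {}/Q in next_ge0 *.
case: k lekn leik next_ge0 => [|k] lekn leik next_ge0; last first.
  by rewrite ltr_wpDr // IHn.
case: n IHn {lekn} leik next_ge0 => [|n] IHn leik next_ge0.
  by case: i leik {next_ge0} => //= _; rewrite coef1 coef0 mulr0 !addr0 ltr01.
rewrite coef0 add0r.
have [ltin | lein] := ltnP i n.+1.
  rewrite ltr_wpDl ?mulr_gt0 ?b_gt0 ?IHn //; last by lia.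
  by case: i {ltin leik next_ge0} => // i; rewrite mulr_ge0 ?coef_tri_lin_ge0.
have -> : i = n.+1 by lia.
by rewrite ltr_wpDr ?mulr_ge0 ?mulr_gt0 ?a_gt0 ?IHn ?coef_tri_lin_ge0 ?subn1.
Qed.

Lemma size_tri_lin n k :
  (0 < k)%N -> (k <= n)%N -> size (tri (lin_weight a b) n k) = (n - k).+1.
Proof.
move=> k_gt0 lekn; apply/eqP; rewrite eqn_leq size_tri_lin_le //=.
rewrite ltnNge; apply/negP => /leq_sizeP /(_ (n - k)%N (leqnn _)) top_eq0.
have := @coef_tri_lin_gt0 n k (n - k) k_gt0 lekn (leqnn _).
by rewrite top_eq0 ltxx.
Qed.

End PositiveLinearWeights.

Definition jacobi_weight {R : nzRingType} (a : nat -> nat -> R) :=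
  lin_weight a (fun n k => a n k ^+ 2).

Lemma jacobi_weightE (R : nzRingType) (a : nat -> nat -> R) n k :
  jacobi_weight a n k = a n k *: ('X + (a n k)%:P).
Proof. by rewrite scalerDr scale_polyC. Qed.

Lemma tri_jacobi_size_coef_gt0 (R : numDomainType) (a : nat -> nat -> R) :
    (forall n k, 0 <= a n k) -> (forall n, (0 < n)%N -> 0 < a n 0) ->
  forall n k, (0 < k)%N -> (k <= n)%N ->
  size (tri (jacobi_weight a) n k) = (n - k).+1 /\
  forall i, (i <= n - k)%N -> 0 < (tri (jacobi_weight a) n k)`_i.
Proof.
move=> a_ge0 a_gt0 n k k_gt0 lekn.
have a2_ge0 n' k' : 0 <= a n' k' ^+ 2 by rewrite exprn_ge0.
have a2_gt0 n' : (0 < n')%N -> 0 < a n' 0 ^+ 2 by move/a_gt0/exprn_gt0.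
split; first exact: size_tri_lin.
by move=> i; apply: coef_tri_lin_gt0.
Qed.

Lemma JS_tri : JS =2 tri (jacobi_weight (fun _ k => k.+1%:R)).
Proof. by elim=> [|n IHn] [|k] //=; rewrite !IHn jacobi_weightE. Qed.

Lemma js_tri : js =2 tri (fun n k => - jacobi_weight (fun n _ => n%:R) n k).
Proof. by elim=> [|n IHn] [|k] //=; rewrite !IHn jacobi_weightE mulNr. Qed.

Lemma stirling2_tri : stirling2 =2 tri (fun _ k => k.+1%:R).
Proof. by elim=> [|n IHn] [|k] //=; rewrite !IHn. Qed.

Lemma stirling1_tri : stirling1 =2 tri (fun n _ => - n%:R).
Proof. by elim=> [|n IHn] [|k] //=; rewrite !IHn mulNr. Qed.

Lemma cfU_tri : cfU =2 tri (fun _ k => k.+1%:R ^+ 2).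
Proof. by elim=> [|n IHn] [|k] //=; rewrite !IHn. Qed.

Lemma cfu_tri : cfu =2 tri (fun n _ => - n%:R ^+ 2).
Proof. by elim=> [|n IHn] [|k] //=; rewrite !IHn mulNr. Qed.

Theorem theorem1 (n k : nat) : (0 < k)%N -> (k <= n)%N ->
  let A := JS n k in
  let B := (-1) ^+ (n - k) * js n k in
  [/\ size A = (n - k).+1,
      (forall i : nat, (i <= n - k)%N -> 0 < A`_i),
      size B = (n - k).+1,
      (forall i : nat, (i <= n - k)%N -> 0 < B`_i) &
      [/\ A`_(n - k) = stirling2 n k,
          A`_0 = cfU n k,
          B`_(n - k) = `|stirling1 n k| &
          B`_0 = `|cfu n k| ]].
Proof.
move=> k_gt0 lekn /=.
rewrite JS_tri js_tri tri_sign stirling2_tri cfU_tri stirling1_tri cfu_tri.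
rewrite !norm_tri_opp => [|m j|m j]; rewrite ?exprn_ge0 ?ler0n //.
have [sizeA coefA_gt0] := @tri_jacobi_size_coef_gt0 _ (fun _ k => k.+1%:R)
  (fun _ k => ler0n int k.+1) (fun _ _ => ltr0Sn int 0) n k k_gt0 lekn.
have nat_gt0 m : (0 < m)%N -> 0 < m%:R :> int by rewrite ltr0n.
have [sizeB coefB_gt0] := @tri_jacobi_size_coef_gt0 _ (fun n _ => n%:R)
  (fun n _ => ler0n int n) nat_gt0 n k k_gt0 lekn.
split=> //; split.
- exact: coef_tri_lin_top.
- exact: coef0_tri_lin.
- exact: coef_tri_lin_top.
- exact: coef0_tri_lin.
Qed.
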